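(* Let $\mathcal K$ be a finitely complete 2-category and $f:A\to B$ a 1-cell. For any span $(d_1,E_1,c_1)$ from $X$ to $Z$ and any discrete fibration $(d_2,E_2,c_2)$ from $A\times X$ to $B\times Z$, composition with the map of spans $i_f\times\mathrm{id}:f\times E_1\to f/B\times E_1$ determines a bijection between maps of spans $f/B\times E_1\to E_2$ and maps of spans $f\times E_1\to E_2$.
   Context: $f/B$ is the lax pullback of $f:A\to B$ and $1_B$, with projections $p:f/B\to A$, $q:f/B\to B$ and universal 2-cell $\lambda:fp\Rightarrow q$; as a span from $A$ to $B$ it is $(p,f/B,q)$. The span $f$ is $(1_A,A,f)$ from $A$ to $B$. $i_f:A\to f/B$ is the unique 1-cell with $pi_f=1_A$, $qi_f=f$ and $\lambda i_f=\mathrm{id}$; it is a map of spans $f\to f/B$. A span from $A$ to $B$ is $(d,E,c)$ with $d:E\to A$, $c:E\to B$; a map of spans is a 1-cell between heads commuting with both legs. The product of spans $(d,E,c)$ from $A$ to $B$ and $(d',E',c')$ from $X$ to $Z$ is $(d\times d',E\times E',c\times c')$ from $A\times X$ to $B\times Z$, and the product of span maps is the product of 1-cells. A span $(d,E,c)$ from $P$ to $Q$ is a discrete fibration from $P$ to $Q$ if for every object $Y$ the span of categories $\mathcal K(Y,P)\leftarrow\mathcal K(Y,E)\to\mathcal K(Y,Q)$ is a discrete fibration: (i) for each object $e$ and arrow $u:a\to d(e)$ there is a unique $\bar u$ with codomain $e$, $d(\bar u)=u$ and $c(\bar u)$ an identity; (ii) for each $v:c(e)\to b$ a unique $\bar v$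 with domain $e$, $d(\bar v)$ an identity and $c(\bar v)=v$; (iii) every arrow $h$ equals the (defined) composite $\overline{d(h)}\circ\overline{c(h)}$. *)

Record TwoCatData := {
  ob : Type;
  hom : ob -> ob -> Type;
  cell : forall A B : ob, hom A B -> hom A B -> Type;
  id1 : forall A : ob, hom A A;
  comp1 : forall A B C : ob, hom B C -> hom A B -> hom A C;
  id2 : forall (A B : ob) (f : hom A B), cell A B f f;
  vcomp : forall (A B : ob) (f g h : hom A B),
      cell A B g h -> cell A B f g -> cell A B f h;
  hcomp : forall (A B C : ob) (g g' : hom B C) (f f' : hom A B),
      cell B C g g' -> cell A B f f' ->
      cell A C (comp1 A B C g f) (comp1 A B C g' f')
}.

Set Implicit Arguments.
Unset Strict Implicit.

Arguments ob : clear implicits.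
Arguments hom {t} A B.
Arguments cell {t A B} f g.
Arguments id1 {t} A.
Arguments comp1 {t A B C} g f.
Arguments id2 {t A B} f.
Arguments vcomp {t A B f g h} _ _.
Arguments hcomp {t A B C g g' f f'} _ _.

(** [g ⊚ f] is "first f, then g". *)
Notation "g ⊚ f" := (comp1 g f) (at level 40, left associativity).

(** Heterogeneous equality of 2-cells (with possibly different boundaries). *)
Definition cheq {K : TwoCatData} {A B : ob K} {f g f' g' : hom A B}
  (α : cell f g) (β : cell f' g') : Prop :=
  existT (fun p : hom A B * hom A B => cell (fst p) (snd p)) (f, g) α
  = existT (fun p : hom A B * hom A B => cell (fst p) (snd p)) (f', g') β.

Definition ccast {K : TwoCatData} {A B : ob K} {f f' g g' : hom A B}
  (e1 : f = f') (e2 : g = g') (α : cell f g) : cell f' g' :=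
  match e1 in _ = x return cell x g' with
  | eq_refl => match e2 in _ = y return cell f y with eq_refl => α end
  end.

Definition lwhisk {K : TwoCatData} {A B C : ob K} (k : hom B C)
  {f f' : hom A B} (α : cell f f') : cell (k ⊚ f) (k ⊚ f') :=
  hcomp (id2 k) α.
Definition rwhisk {K : TwoCatData} {A B C : ob K} {g g' : hom B C}
  (α : cell g g') (k : hom A B) : cell (g ⊚ k) (g' ⊚ k) :=
  hcomp α (id2 k).

Record TwoCatAxioms (K : TwoCatData) : Prop := {
  ax_idl : forall (A B : ob K) (f : hom A B), id1 B ⊚ f = f;
  ax_idr : forall (A B : ob K) (f : hom A B), f ⊚ id1 A = f;
  ax_assoc : forall (A B C D : ob K) (h : hom C D) (g : hom B C) (f : hom A B),
      h ⊚ (g ⊚ f) = (h ⊚ g) ⊚ f;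
  ax_vidl : forall (A B : ob K) (f g : hom A B) (α : cell f g),
      vcomp (id2 g) α = α;
  ax_vidr : forall (A B : ob K) (f g : hom A B) (α : cell f g),
      vcomp α (id2 f) = α;
  ax_vassoc : forall (A B : ob K) (f g h k : hom A B)
      (γ : cell h k) (β : cell g h) (α : cell f g),
      vcomp γ (vcomp β α) = vcomp (vcomp γ β) α;
  ax_hid : forall (A B C : ob K) (g : hom B C) (f : hom A B),
      hcomp (id2 g) (id2 f) = id2 (g ⊚ f);
  ax_interchange : forall (A B C : ob K) (g g' g'' : hom B C)
      (f f' f'' : hom A B) (β' : cell g' g'') (β : cell g g')
      (α' : cell f' f'') (α : cell f f'),
      hcomp (vcomp β' β) (vcomp α' α) = vcomp (hcomp β' α') (hcomp β α);
  ax_hidl : forall (A B : ob K) (f f' : hom A B) (α : cell f f'),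
      cheq (hcomp (id2 (id1 B)) α) α;
  ax_hidr : forall (A B : ob K) (f f' : hom A B) (α : cell f f'),
      cheq (hcomp α (id2 (id1 A))) α;
  ax_hassoc : forall (A B C D : ob K) (h h' : hom C D) (g g' : hom B C)
      (f f' : hom A B) (γ : cell h h') (β : cell g g') (α : cell f f'),
      cheq (hcomp γ (hcomp β α)) (hcomp (hcomp γ β) α)
}.

Record TwoCat := {
  tc :> TwoCatData;
  tc_ax : TwoCatAxioms tc
}.

Definition lam_at {K : TwoCat} {A B C : ob K} {f : hom A C} {g : hom B C}
  {P : ob K} {p : hom P A} {q : hom P B} (lam : cell (f ⊚ p) (g ⊚ q))
  {Y : ob K} (h : hom Y P) : cell (f ⊚ (p ⊚ h)) (g ⊚ (q ⊚ h)) :=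
  ccast (eq_sym (ax_assoc (tc_ax K) f p h))
        (eq_sym (ax_assoc (tc_ax K) g q h)) (rwhisk lam h).

Definition has_terminal (K : TwoCat) : Prop :=
  exists T : ob K,
    (forall Y : ob K, exists! h : hom Y T, True) /\
    (forall (Y : ob K) (h h' : hom Y T), exists! θ : cell h h', True).

Definition has_equalizers (K : TwoCat) : Prop :=
  forall (A B : ob K) (f g : hom A B),
  exists (E : ob K) (e : hom E A),
    f ⊚ e = g ⊚ e /\
    (forall (Y : ob K) (k : hom Y A), f ⊚ k = g ⊚ k ->
       exists! h : hom Y E, e ⊚ h = k) /\
    (forall (Y : ob K) (h h' : hom Y E) (α : cell (e ⊚ h) (e ⊚ h')),
       cheq (lwhisk f α) (lwhisk g α) ->
       exists! θ : cell h h', lwhisk e θ = α).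

Unset Implicit Arguments.

(** Chosen binary 2-products: [K(Y, A×B) ≅ K(Y,A) × K(Y,B)] as categories. *)
Record Product (K : TwoCat) (A B : ob K) := {
  pr_ob : ob K;
  pr1 : hom pr_ob A;
  pr2 : hom pr_ob B;
  pr_pair : forall Y : ob K, hom Y A -> hom Y B -> hom Y pr_ob;
  pr_pair1 : forall Y a b, pr1 ⊚ pr_pair Y a b = a;
  pr_pair2 : forall Y a b, pr2 ⊚ pr_pair Y a b = b;
  pr_pair_uniq : forall Y (h : hom Y pr_ob), h = pr_pair Y (pr1 ⊚ h) (pr2 ⊚ h);
  pr_pair2c : forall Y (h h' : hom Y pr_ob),
      cell (pr1 ⊚ h) (pr1 ⊚ h') -> cell (pr2 ⊚ h) (pr2 ⊚ h') -> cell h h';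
  pr_pair2c1 : forall Y h h' α β, lwhisk pr1 (pr_pair2c Y h h' α β) = α;
  pr_pair2c2 : forall Y h h' α β, lwhisk pr2 (pr_pair2c Y h h' α β) = β;
  pr_pair2c_uniq : forall Y h h' (θ : cell h h'),
      θ = pr_pair2c Y h h' (lwhisk pr1 θ) (lwhisk pr2 θ)
}.

Record Comma (K : TwoCat) (A B C : ob K) (f : hom A C) (g : hom B C) := {
  cm_ob : ob K;
  cm_p : hom cm_ob A;
  cm_q : hom cm_ob B;
  cm_lam : cell (f ⊚ cm_p) (g ⊚ cm_q);
  cm_lift : forall (Y : ob K) (a : hom Y A) (b : hom Y B),
      cell (f ⊚ a) (g ⊚ b) -> hom Y cm_ob;
  cm_lift_p : forall Y a b μ, cm_p ⊚ cm_lift Y a b μ = a;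
  cm_lift_q : forall Y a b μ, cm_q ⊚ cm_lift Y a b μ = b;
  cm_lift_lam : forall Y a b μ, cheq (rwhisk cm_lam (cm_lift Y a b μ)) μ;
  cm_lift_uniq : forall Y (h : hom Y cm_ob) a b (μ : cell (f ⊚ a) (g ⊚ b)),
      cm_p ⊚ h = a -> cm_q ⊚ h = b -> cheq (rwhisk cm_lam h) μ ->
      h = cm_lift Y a b μ;
  cm_lift2 : forall (Y : ob K) (h h' : hom Y cm_ob)
      (α : cell (cm_p ⊚ h) (cm_p ⊚ h')) (β : cell (cm_q ⊚ h) (cm_q ⊚ h')),
      vcomp (lwhisk g β) (lam_at cm_lam h) = vcomp (lam_at cm_lam h') (lwhisk f α) ->
      cell h h';
  cm_lift2_p : forall Y h h' α β H, lwhisk cm_p (cm_lift2 Y h h' α β H) = α;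
  cm_lift2_q : forall Y h h' α β H, lwhisk cm_q (cm_lift2 Y h h' α β H) = β;
  cm_lift2_uniq : forall Y h h' α β H (θ : cell h h'),
      lwhisk cm_p θ = α -> lwhisk cm_q θ = β -> θ = cm_lift2 Y h h' α β H
}.

Arguments Comma K {A B C} f g.
Arguments pr_ob {K A B} p.
Arguments pr1 {K A B} p.
Arguments pr2 {K A B} p.
Arguments pr_pair {K A B} p Y _ _.
Arguments cm_ob {K A B C f g} c.
Arguments cm_p {K A B C f g} c.
Arguments cm_q {K A B C f g} c.
Arguments cm_lam {K A B C f g} c.
Arguments cm_lift {K A B C f g} c Y a b _.
Set Implicit Arguments.

Record FinLimits (K : TwoCat) := {
  fl_terminal : has_terminal K;
  fl_equalizers : has_equalizers K;
  fl_prod : forall A B : ob K, Product K A B;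
  fl_comma : forall (A B C : ob K) (f : hom A C) (g : hom B C), Comma K f g
}.
Arguments fl_prod {K} _ A B.
Arguments fl_comma {K} _ {A B C} f g.

Section Constructions.
Context {K : TwoCat} (L : FinLimits K).

Definition pob (A B : ob K) : ob K := pr_ob (fl_prod L A B).

Definition prod1 {E A E' X : ob K} (u : hom E A) (v : hom E' X) :
  hom (pob E E') (pob A X) :=
  pr_pair (fl_prod L A X) _ (u ⊚ pr1 (fl_prod L E E')) (v ⊚ pr2 (fl_prod L E E')).

Definition commaB {A B : ob K} (f : hom A B) : Comma K f (id1 B) :=
  fl_comma L f (id1 B).

Definition i_f {A B : ob K} (f : hom A B) : hom A (cm_ob (commaB f)) :=
  cm_lift (commaB f) A (id1 A) f
    (ccast (eq_sym (ax_idr (tc_ax K) f)) (eq_sym (ax_idl (tc_ax K) f)) (id2 f)).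

End Constructions.

Record Span (K : TwoCat) (P Q : ob K) := {
  sp_head : ob K;
  sp_d : hom sp_head P;
  sp_c : hom sp_head Q
}.
Arguments Span : clear implicits.
Arguments sp_head {K P Q} s.
Arguments sp_d {K P Q} s.
Arguments sp_c {K P Q} s.

Definition is_span_map {K : TwoCat} {P Q : ob K} (S T : Span K P Q)
  (h : hom (sp_head S) (sp_head T)) : Prop :=
  sp_d T ⊚ h = sp_d S /\ sp_c T ⊚ h = sp_c S.

Definition span_of {K : TwoCat} {A B : ob K} (f : hom A B) : Span K A B :=
  {| sp_head := A; sp_d := id1 A; sp_c := f |}.

Definition comma_span {K : TwoCat} (L : FinLimits K) {A B : ob K} (f : hom A B)
  : Span K A B :=
  {| sp_head := cm_ob (commaB L f); sp_d := cm_p _; sp_c := cm_q _ |}.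

Definition prod_span {K : TwoCat} (L : FinLimits K) {P Q X Z : ob K}
  (S : Span K P Q) (T : Span K X Z) : Span K (pob L P X) (pob L Q Z) :=
  {| sp_head := pob L (sp_head S) (sp_head T);
     sp_d := prod1 L (sp_d S) (sp_d T);
     sp_c := prod1 L (sp_c S) (sp_c T) |}.

Unset Implicit Arguments.
Section DFib.
Context {K : TwoCat} {P Q : ob K} (S : Span K P Q).

Definition is_dlift {Y : ob K} (e : hom Y (sp_head S)) {a : hom Y P}
  (u : cell a (sp_d S ⊚ e)) (e1 : hom Y (sp_head S)) (ub : cell e1 e) : Prop :=
  cheq (lwhisk (sp_d S) ub) u /\
  exists x : hom Y Q, cheq (lwhisk (sp_c S) ub) (id2 x).

Definition is_clift {Y : ob K} (e : hom Y (sp_head S)) {b : hom Y Q}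
  (v : cell (sp_c S ⊚ e) b) (e2 : hom Y (sp_head S)) (vb : cell e e2) : Prop :=
  (exists x : hom Y P, cheq (lwhisk (sp_d S) vb) (id2 x)) /\
  cheq (lwhisk (sp_c S) vb) v.

Definition is_discrete_fibration : Prop :=
  (forall (Y : ob K) (e : hom Y (sp_head S)) (a : hom Y P)
          (u : cell a (sp_d S ⊚ e)),
     exists (e1 : hom Y (sp_head S)) (ub : cell e1 e),
       is_dlift e u e1 ub /\
       forall (e1' : hom Y (sp_head S)) (ub' : cell e1' e),
         is_dlift e u e1' ub' ->
         existT (fun x => cell x e) e1' ub' = existT (fun x => cell x e) e1 ub) /\
  (forall (Y : ob K) (e : hom Y (sp_head S)) (b : hom Y Q)
          (v : cell (sp_c S ⊚ e) b),
     exists (e2 : hom Y (sp_head S)) (vb : cell e e2),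
       is_clift e v e2 vb /\
       forall (e2' : hom Y (sp_head S)) (vb' : cell e e2'),
         is_clift e v e2' vb' ->
         existT (fun x => cell e x) e2' vb' = existT (fun x => cell e x) e2 vb) /\
  (forall (Y : ob K) (e e' : hom Y (sp_head S)) (h : cell e e')
          (e1 : hom Y (sp_head S)) (ub : cell e1 e')
          (e2 : hom Y (sp_head S)) (vb : cell e e2),
     is_dlift e' (lwhisk (sp_d S) h) e1 ub ->
     is_clift e (lwhisk (sp_c S) h) e2 vb ->
     exists E : e2 = e1, h = vcomp ub (ccast eq_refl E vb)).

End DFib.

Arguments is_span_map {K P Q} S T h.
Arguments is_discrete_fibration {K P Q} S.
Arguments pob {K} L A B.
Arguments prod1 {K} L {E A E' X} u v.
Arguments i_f {K} L {A B} f.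

From Stdlib Require Import ssreflect Eqdep.

(* The 1-cell [i_f] is left adjoint to [p] with identity unit: the counit
   [τ : i_f p ⇒ 1] is the 2-cell into [f/B] with components [(id, λ)], and
   [p τ = id], [τ i_f = id].  Hence [σ := τ × 1] on [f/B × E1] is vertical for the
   leg [p × d1] and vanishes on [i_f × 1].  Given a span map [k : f × E1 → E2], the
   2-cell [(q × c1) σ] starts at [c (k (p × 1))]; its opcartesian lift in the
   discrete fibration [E2] ends at a span map [h], and whiskering the lift by
   [i_f × 1] gives a lift of an identity, so [h (i_f × 1) = k].  Any other
   extension [h'] carries the vertical 2-cell [h' σ] lifting the same 2-cell, so
   [h' = h] by uniqueness of lifts. *)

(* [cheq] is an equation between dependent pairs, so after [rewrite /cheq] the
   [cheq] lemmas below serve as rewrite rules. *)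
Section TwoCellEquality.
Context {K : TwoCat}.
Local Notation AX := (tc_ax K).

Lemma cheq_boundary {A B : ob K} {f g f' g' : hom A B} {α : cell f g} {β : cell f' g'} :
  cheq α β -> f = f' /\ g = g'.
Proof. by move=> /(f_equal (@projT1 _ _)) /= [-> ->]. Qed.

Lemma cheq_eq {A B : ob K} {f g : hom A B} {α β : cell f g} : cheq α β -> α = β.
Proof. exact: inj_pair2. Qed.

Lemma cheq_sym {A B : ob K} {f g f' g' : hom A B} {α : cell f g} {β : cell f' g'} :
  cheq α β -> cheq β α.
Proof. exact: eq_sym. Qed.

Lemma cheq_ccast {A B : ob K} {f f' g g' : hom A B} (e1 : f = f') (e2 : g = g')
  (α : cell f g) : cheq (ccast e1 e2 α) α.
Proof. by case: f' / e1; case: g' / e2. Qed.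

Lemma id2_cheq {A B : ob K} {a b : hom A B} : a = b -> cheq (id2 a) (id2 b).
Proof. by move->. Qed.

Lemma hcomp_cheq {A B C : ob K} {g g' h h' : hom B C} {f f' k k' : hom A B}
  {β : cell g g'} {β' : cell h h'} {α : cell f f'} {α' : cell k k'} :
  cheq β β' -> cheq α α' -> cheq (hcomp β α) (hcomp β' α').
Proof.
move=> Hβ Hα; case: (cheq_boundary Hβ) (cheq_boundary Hα) => ?? [??]; subst.
by rewrite (cheq_eq Hβ) (cheq_eq Hα).
Qed.

Lemma vcomp_cheq {A B : ob K} {f g h f' g' h' : hom A B}
  {β : cell g h} {α : cell f g} {β' : cell g' h'} {α' : cell f' g'} :
  cheq β β' -> cheq α α' -> cheq (vcomp β α) (vcomp β' α').
Proof.
move=> Hβ Hα; case: (cheq_boundary Hβ) (cheq_boundary Hα) => ?? [??]; subst.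
by rewrite (cheq_eq Hβ) (cheq_eq Hα).
Qed.

Lemma lwhisk_cheq {A B C : ob K} (g : hom B C) {x y x' y' : hom A B}
  {α : cell x y} {α' : cell x' y'} : cheq α α' -> cheq (lwhisk g α) (lwhisk g α').
Proof. exact: hcomp_cheq. Qed.

Lemma rwhisk_cheq {A B C : ob K} {x y x' y' : hom B C} (k : hom A B)
  {α : cell x y} {α' : cell x' y'} : cheq α α' -> cheq (rwhisk α k) (rwhisk α' k).
Proof. by move/hcomp_cheq; apply. Qed.

Lemma lwhisk_eq {A B C : ob K} {g g' : hom B C} {x y : hom A B} (α : cell x y) :
  g = g' -> cheq (lwhisk g α) (lwhisk g' α).
Proof. by move->. Qed.

Lemma rwhisk_eq {A B C : ob K} {x y : hom B C} {k k' : hom A B} (α : cell x y) :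
  k = k' -> cheq (rwhisk α k) (rwhisk α k').
Proof. by move->. Qed.

Lemma lwhisk_id {A B C : ob K} (g : hom B C) (f : hom A B) :
  lwhisk g (id2 f) = id2 (g ⊚ f).
Proof. exact: (ax_hid AX). Qed.

Lemma rwhisk_id {A B C : ob K} (g : hom B C) (f : hom A B) :
  rwhisk (id2 g) f = id2 (g ⊚ f).
Proof. exact: (ax_hid AX). Qed.

Lemma lwhisk_id1 {A B : ob K} {x y : hom A B} (α : cell x y) :
  cheq (lwhisk (id1 B) α) α.
Proof. exact: (ax_hidl AX). Qed.

Lemma rwhisk_id1 {A B : ob K} {x y : hom A B} (α : cell x y) :
  cheq (rwhisk α (id1 A)) α.
Proof. exact: (ax_hidr AX). Qed.

Lemma lwhisk_lwhisk {A B C D : ob K} (g : hom C D) (f : hom B C) {x y : hom A B}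
  (α : cell x y) : cheq (lwhisk g (lwhisk f α)) (lwhisk (g ⊚ f) α).
Proof. by rewrite /cheq (ax_hassoc AX) (ax_hid AX). Qed.

Lemma rwhisk_rwhisk {A B C D : ob K} {x y : hom C D} (α : cell x y) (k : hom B C)
  (k' : hom A B) : cheq (rwhisk (rwhisk α k) k') (rwhisk α (k ⊚ k')).
Proof. by rewrite /cheq -(ax_hassoc AX) (ax_hid AX). Qed.

Lemma lwhisk_rwhisk {A B C D : ob K} (g : hom C D) {x y : hom B C} (α : cell x y)
  (k : hom A B) : cheq (lwhisk g (rwhisk α k)) (rwhisk (lwhisk g α) k).
Proof. exact: (ax_hassoc AX). Qed.

End TwoCellEquality.

Section Products.
Context {K : TwoCat} (L : FinLimits K).
Local Notation AX := (tc_ax K).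
Local Notation π1 := (pr1 (fl_prod L _ _)).
Local Notation π2 := (pr2 (fl_prod L _ _)).

Lemma prod1_pr1 {E A E' X : ob K} (u : hom E A) (v : hom E' X) :
  π1 ⊚ prod1 L u v = u ⊚ π1.
Proof. exact: pr_pair1. Qed.

Lemma prod1_pr2 {E A E' X : ob K} (u : hom E A) (v : hom E' X) :
  π2 ⊚ prod1 L u v = v ⊚ π2.
Proof. exact: pr_pair2. Qed.

Lemma prod_hom_ext {A X Y : ob K} {h h' : hom Y (pob L A X)} :
  π1 ⊚ h = π1 ⊚ h' -> π2 ⊚ h = π2 ⊚ h' -> h = h'.
Proof. by move=> H1 H2; rewrite (pr_pair_uniq _ _ _ _ _ h) H1 H2 -pr_pair_uniq. Qed.

Lemma prod1_comp {E A E' X F F' : ob K} (u : hom E A) (v : hom E' X)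
  (u' : hom F E) (v' : hom F' E') :
  prod1 L u v ⊚ prod1 L u' v' = prod1 L (u ⊚ u') (v ⊚ v').
Proof.
apply: prod_hom_ext.
- by rewrite (ax_assoc AX) !prod1_pr1 -[LHS](ax_assoc AX) prod1_pr1 (ax_assoc AX).
- by rewrite (ax_assoc AX) !prod1_pr2 -[LHS](ax_assoc AX) prod1_pr2 (ax_assoc AX).
Qed.

Lemma prod1_id {A X : ob K} : prod1 L (id1 A) (id1 X) = id1 (pob L A X).
Proof.
by apply: prod_hom_ext; rewrite ?prod1_pr1 ?prod1_pr2 (ax_idl AX) (ax_idr AX).
Qed.

Lemma prod_cell_ext {A X Y : ob K} {h h' k k' : hom Y (pob L A X)}
  (θ : cell h h') (θ' : cell k k') :
  cheq (lwhisk π1 θ) (lwhisk π1 θ') -> cheq (lwhisk π2 θ) (lwhisk π2 θ') ->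
  cheq θ θ'.
Proof.
move=> H1 H2; case: (cheq_boundary H1) (cheq_boundary H2) => E1 E1' [E2 E2'].
move: (prod_hom_ext E1 E2) (prod_hom_ext E1' E2') => Ek Ek'; subst k k'.
rewrite (pr_pair2c_uniq _ _ _ _ _ _ _ θ) (pr_pair2c_uniq _ _ _ _ _ _ _ θ').
by rewrite (cheq_eq H1) (cheq_eq H2).
Qed.

Definition prod2 {E A E' X : ob K} {u u' : hom E A} {v v' : hom E' X}
  (α : cell u u') (β : cell v v') : cell (prod1 L u v) (prod1 L u' v') :=
  pr_pair2c _ _ _ (fl_prod L A X) _ (prod1 L u v) (prod1 L u' v')
    (ccast (eq_sym (prod1_pr1 u v)) (eq_sym (prod1_pr1 u' v')) (rwhisk α π1))
    (ccast (eq_sym (prod1_pr2 u v)) (eq_sym (prod1_pr2 u' v')) (rwhisk β π2)).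

Lemma prod2_pr1 {E A E' X : ob K} {u u' : hom E A} {v v' : hom E' X}
  (α : cell u u') (β : cell v v') : cheq (lwhisk π1 (prod2 α β)) (rwhisk α π1).
Proof. by rewrite /cheq pr_pair2c1 cheq_ccast. Qed.

Lemma prod2_pr2 {E A E' X : ob K} {u u' : hom E A} {v v' : hom E' X}
  (α : cell u u') (β : cell v v') : cheq (lwhisk π2 (prod2 α β)) (rwhisk β π2).
Proof. by rewrite /cheq pr_pair2c2 cheq_ccast. Qed.

Lemma lwhisk_prod2 {E A E' X A' X' : ob K} {u u' : hom E A} {v v' : hom E' X}
  (α : cell u u') (β : cell v v') (a : hom A A') (b : hom X X') :
  cheq (lwhisk (prod1 L a b) (prod2 α β)) (prod2 (lwhisk a α) (lwhisk b β)).
Proof.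
apply: prod_cell_ext; rewrite /cheq lwhisk_lwhisk ?prod2_pr1 ?prod2_pr2.
- by rewrite (lwhisk_eq _ (prod1_pr1 a b)) -lwhisk_lwhisk (lwhisk_cheq _ (prod2_pr1 _ _))
    lwhisk_rwhisk.
- by rewrite (lwhisk_eq _ (prod1_pr2 a b)) -lwhisk_lwhisk (lwhisk_cheq _ (prod2_pr2 _ _))
    lwhisk_rwhisk.
Qed.

Lemma rwhisk_prod2 {E A E' X F F' : ob K} {u u' : hom E A} {v v' : hom E' X}
  (α : cell u u') (β : cell v v') (x : hom F E) (y : hom F' E') :
  cheq (rwhisk (prod2 α β) (prod1 L x y)) (prod2 (rwhisk α x) (rwhisk β y)).
Proof.
apply: prod_cell_ext; rewrite /cheq lwhisk_rwhisk ?prod2_pr1 ?prod2_pr2.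
- by rewrite (rwhisk_cheq _ (prod2_pr1 _ _)) rwhisk_rwhisk (rwhisk_eq _ (prod1_pr1 x y))
    -rwhisk_rwhisk.
- by rewrite (rwhisk_cheq _ (prod2_pr2 _ _)) rwhisk_rwhisk (rwhisk_eq _ (prod1_pr2 x y))
    -rwhisk_rwhisk.
Qed.


Lemma prod2_cheq {E A E' X : ob K} {u u' w w' : hom E A} {v v' z z' : hom E' X}
  {α : cell u u'} {α' : cell w w'} {β : cell v v'} {β' : cell z z'} :
  cheq α α' -> cheq β β' -> cheq (prod2 α β) (prod2 α' β').
Proof.
move=> Hα Hβ; case: (cheq_boundary Hα) (cheq_boundary Hβ) => ?? [??]; subst.
by rewrite (cheq_eq Hα) (cheq_eq Hβ).
Qed.

Lemma prod2_id {E A E' X : ob K} (u : hom E A) (v : hom E' X) :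
  cheq (prod2 (id2 u) (id2 v)) (id2 (prod1 L u v)).
Proof.
apply: prod_cell_ext; rewrite /cheq ?prod2_pr1 ?prod2_pr2 rwhisk_id lwhisk_id.
- exact/id2_cheq/eq_sym/prod1_pr1.
- exact/id2_cheq/eq_sym/prod1_pr2.
Qed.

End Products.

Lemma comma_cell_id {K : TwoCat} {A B C : ob K} {f : hom A C} {g : hom B C}
  (c : Comma K f g) {Y : ob K} {h h' : hom Y (cm_ob c)} (θ : cell h h') a b :
  h = h' -> cheq (lwhisk (cm_p c) θ) (id2 a) -> cheq (lwhisk (cm_q c) θ) (id2 b) ->
  cheq θ (id2 h).
Proof.
move=> Eh Hp Hq; subst h'.
case: (cheq_boundary Hp) (cheq_boundary Hq) => Ea _ [Eb _]; subst a b.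
move: Hp Hq => /cheq_eq Hp /cheq_eq Hq.
have Hλ : vcomp (lwhisk g (id2 (cm_q c ⊚ h))) (lam_at (cm_lam c) h) =
          vcomp (lam_at (cm_lam c) h) (lwhisk f (id2 (cm_p c ⊚ h))).
  by rewrite !lwhisk_id (ax_vidl (tc_ax K)) (ax_vidr (tc_ax K)).
by rewrite (cm_lift2_uniq _ _ _ _ _ _ c Y h h _ _ Hλ θ Hp Hq)
  -(cm_lift2_uniq _ _ _ _ _ _ c Y h h _ _ Hλ (id2 h)) ?lwhisk_id.
Qed.

Section Counit.
Context {K : TwoCat} (L : FinLimits K) {A B : ob K} (f : hom A B).
Local Notation AX := (tc_ax K).
Local Notation p := (cm_p (commaB L f)).
Local Notation q := (cm_q (commaB L f)).
Local Notation λ := (cm_lam (commaB L f)).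
Local Notation i := (i_f L f).

Lemma i_f_p : p ⊚ i = id1 A.
Proof. exact: cm_lift_p. Qed.

Lemma i_f_q : q ⊚ i = f.
Proof. exact: cm_lift_q. Qed.

Lemma i_f_lam : cheq (rwhisk λ i) (id2 f).
Proof. by rewrite /cheq cm_lift_lam cheq_ccast. Qed.

Lemma p_i_f_comp {Y : ob K} (x : hom Y A) : p ⊚ (i ⊚ x) = x.
Proof. by rewrite (ax_assoc AX) i_f_p (ax_idl AX). Qed.

Lemma q_i_f_comp {Y : ob K} (x : hom Y A) : q ⊚ (i ⊚ x) = f ⊚ x.
Proof. by rewrite (ax_assoc AX) i_f_q. Qed.

Let counit_pcell : cell (p ⊚ (i ⊚ p)) (p ⊚ id1 _) :=
  ccast (eq_sym (p_i_f_comp p)) (eq_sym (ax_idr AX p)) (id2 p).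

Let counit_qcell : cell (q ⊚ (i ⊚ p)) (q ⊚ id1 _) :=
  ccast (eq_sym (q_i_f_comp p)) (eq_trans (ax_idl AX q) (eq_sym (ax_idr AX q))) λ.

Lemma counit_compatible :
  vcomp (lwhisk (id1 B) counit_qcell) (lam_at λ (i ⊚ p)) =
  vcomp (lam_at λ (id1 _)) (lwhisk f counit_pcell).
Proof.
apply: cheq_eq.
have Hq : cheq (lwhisk (id1 B) counit_qcell) λ by rewrite /cheq lwhisk_id1 cheq_ccast.
have Hλi : cheq (lam_at λ (i ⊚ p)) (id2 (f ⊚ p)).
  by rewrite /lam_at /cheq cheq_ccast -rwhisk_rwhisk (rwhisk_cheq _ i_f_lam) rwhisk_id.
have Hλ1 : cheq (lam_at λ (id1 _)) λ by rewrite /lam_at /cheq cheq_ccast rwhisk_id1.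
have Hp : cheq (lwhisk f counit_pcell) (id2 (f ⊚ p)).
  by rewrite /cheq (lwhisk_cheq _ (cheq_ccast _ _ _)) lwhisk_id.
by rewrite /cheq (vcomp_cheq Hq Hλi) (vcomp_cheq Hλ1 Hp).
Qed.

Definition counit : cell (i ⊚ p) (id1 (cm_ob (commaB L f))) :=
  cm_lift2 _ _ _ _ _ _ _ _ _ _ _ _ counit_compatible.

Lemma counit_p : cheq (lwhisk p counit) (id2 p).
Proof. by rewrite /cheq cm_lift2_p cheq_ccast. Qed.

Lemma counit_q : cheq (lwhisk q counit) λ.
Proof. by rewrite /cheq cm_lift2_q cheq_ccast. Qed.

Lemma counit_i_f : cheq (rwhisk counit i) (id2 i).
Proof.
have Ei : (i ⊚ p) ⊚ i = id1 _ ⊚ i.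
  by rewrite -(ax_assoc AX) i_f_p (ax_idr AX) (ax_idl AX).
apply: (eq_trans (comma_cell_id _ _ (p ⊚ i) f Ei _ _) (id2_cheq _)).
- by rewrite /cheq lwhisk_rwhisk (rwhisk_cheq _ counit_p) rwhisk_id.
- by rewrite /cheq lwhisk_rwhisk (rwhisk_cheq _ counit_q) i_f_lam.
- by rewrite -(ax_assoc AX) i_f_p (ax_idr AX).
Qed.

End Counit.

Lemma is_span_map_comp {K : TwoCat} {P Q : ob K} {S T U : Span K P Q}
  {h : hom (sp_head S) (sp_head T)} {g : hom (sp_head T) (sp_head U)} :
  is_span_map S T h -> is_span_map T U g -> is_span_map S U (g ⊚ h).
Proof.
by case=> hd hc [gd gc]; split; rewrite (ax_assoc (tc_ax K)) ?gd ?gc.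
Qed.

Section DiscreteFibration.
Context {K : TwoCat} {P Q : ob K} (S : Span K P Q) (DF : is_discrete_fibration S).

Lemma dfib_cell_codomain_unique {Y : ob K} {e e' x x' : hom Y (sp_head S)}
  (θ : cell e x) (θ' : cell e' x') :
  e = e' ->
  (exists a, cheq (lwhisk (sp_d S) θ) (id2 a)) ->
  (exists a', cheq (lwhisk (sp_d S) θ') (id2 a')) ->
  cheq (lwhisk (sp_c S) θ) (lwhisk (sp_c S) θ') -> x = x'.
Proof.
move=> Ee dθ dθ' Hc; subst e'.
case: DF => _ [clift _].
have [e2 [vb [_ uniq]]] := clift Y e _ (lwhisk (sp_c S) θ).
have /(f_equal (@projT1 _ _)) /= -> := uniq x θ (conj dθ eq_refl).
by have /(f_equal (@projT1 _ _)) /= -> := uniq x' θ' (conj dθ' (cheq_sym Hc)).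
Qed.

Lemma dfib_cell_endpoints_eq {Y : ob K} {e x : hom Y (sp_head S)} (θ : cell e x) :
  (exists a, cheq (lwhisk (sp_d S) θ) (id2 a)) ->
  (exists b, cheq (lwhisk (sp_c S) θ) (id2 b)) -> x = e.
Proof.
move=> dθ [b cθ]; apply: (dfib_cell_codomain_unique θ (id2 e) eq_refl dθ).
- by exists (sp_d S ⊚ e); rewrite lwhisk_id.
- rewrite /cheq cθ lwhisk_id.
  exact: (id2_cheq (eq_sym (proj1 (cheq_boundary cθ)))).
Qed.

End DiscreteFibration.

Section Extension.
Context {K : TwoCat} {P Q : ob K} (N M S : Span K P Q) (DF : is_discrete_fibration S).
Context (i : hom (sp_head N) (sp_head M)) (r : hom (sp_head M) (sp_head N))
  (σ : cell (i ⊚ r) (id1 (sp_head M))).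
Hypotheses (i_map : is_span_map N M i) (r_i : r ⊚ i = id1 (sp_head N))
  (σ_d : cheq (lwhisk (sp_d M) σ) (id2 (sp_d M))) (σ_i : cheq (rwhisk σ i) (id2 i)).
Local Notation AX := (tc_ax K).

Lemma dfib_extension_unique (h h' : hom (sp_head M) (sp_head S)) :
  is_span_map M S h -> is_span_map M S h' -> h ⊚ i = h' ⊚ i -> h = h'.
Proof.
move=> [hd hc] [h'd h'c] Ehi; rewrite -(ax_idr AX h) -(ax_idr AX h').
apply: (dfib_cell_codomain_unique S DF (lwhisk h σ) (lwhisk h' σ)).
- by rewrite !(ax_assoc AX) Ehi.
- by exists (sp_d M); rewrite /cheq lwhisk_lwhisk (lwhisk_eq _ hd) σ_d.
- by exists (sp_d M); rewrite /cheq lwhisk_lwhisk (lwhisk_eq _ h'd) σ_d.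
- by rewrite /cheq !lwhisk_lwhisk (lwhisk_eq _ hc) (lwhisk_eq _ h'c).
Qed.

Lemma dfib_extension_exists (k : hom (sp_head N) (sp_head S)) :
  is_span_map N S k -> exists h, is_span_map M S h /\ h ⊚ i = k.
Proof.
case=> kd kc; case: (i_map) => i_d i_c.
have c_kr : sp_c M ⊚ (i ⊚ r) = sp_c S ⊚ (k ⊚ r).
  by rewrite !(ax_assoc AX) i_c kc.
case: DF => _ [clift _].
have [h [vb [[[x dvb] cvb] _]]] :=
  clift _ (k ⊚ r) _ (ccast c_kr eq_refl (lwhisk (sp_c M) σ)).
case: (cheq_boundary dvb) (cheq_boundary cvb) => Ex Ex' [_ Ec].
exists h; split; [split|].
- by rewrite Ex' -Ex (ax_assoc AX) kd -i_d -(ax_assoc AX) (proj1 (cheq_boundary σ_d)).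
- by rewrite Ec (ax_idr AX).
- rewrite -[RHS](ax_idr AX) -r_i (ax_assoc AX).
  apply: (dfib_cell_endpoints_eq S DF (rwhisk vb i)).
  + by exists (x ⊚ i); rewrite /cheq lwhisk_rwhisk (rwhisk_cheq _ dvb) rwhisk_id.
  + exists (sp_c M ⊚ i).
    by rewrite /cheq lwhisk_rwhisk (rwhisk_cheq _ cvb) (rwhisk_cheq _ (cheq_ccast _ _ _))
      -lwhisk_rwhisk (lwhisk_cheq _ σ_i) lwhisk_id.
Qed.

End Extension.

Section CommaTimesSpan.
Context {K : TwoCat} (L : FinLimits K) {A B : ob K} (f : hom A B) {X Z : ob K}
  (E1 : Span K X Z).
Local Notation AX := (tc_ax K).
Local Notation p := (cm_p (commaB L f)).
Local Notation I := (prod1 L (i_f L f) (id1 (sp_head E1))).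
Local Notation R := (prod1 L p (id1 (sp_head E1))).

Lemma i_f_prod_span_map :
  is_span_map (prod_span L (span_of f) E1) (prod_span L (comma_span L f) E1) I.
Proof. by split; rewrite /= prod1_comp ?i_f_p ?i_f_q (ax_idr AX). Qed.

Lemma prod_p_i_f : R ⊚ I = id1 _.
Proof. by rewrite prod1_comp i_f_p (ax_idr AX) prod1_id. Qed.

Lemma prod_i_f_p : prod1 L (i_f L f ⊚ p) (id1 (sp_head E1)) = I ⊚ R.
Proof. by rewrite prod1_comp (ax_idl AX). Qed.

Definition counit_prod : cell (I ⊚ R) (id1 _) :=
  ccast prod_i_f_p (prod1_id L) (prod2 L (counit L f) (id2 (id1 (sp_head E1)))).

Lemma counit_prod_d :
  cheq (lwhisk (prod1 L p (sp_d E1)) counit_prod) (id2 (prod1 L p (sp_d E1))).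
Proof.
rewrite /cheq (lwhisk_cheq _ (cheq_ccast _ _ _)) lwhisk_prod2 lwhisk_id.
rewrite (prod2_cheq L (counit_p L f) eq_refl) prod2_id.
by apply: id2_cheq; rewrite (ax_idr AX).
Qed.

Lemma counit_prod_i_f : cheq (rwhisk counit_prod I) (id2 I).
Proof.
rewrite /cheq (rwhisk_cheq _ (cheq_ccast _ _ _)) rwhisk_prod2.
by rewrite (prod2_cheq L (counit_i_f L f) (rwhisk_id1 _)) prod2_id.
Qed.

End CommaTimesSpan.

Theorem lemma8p3 (K : TwoCat) (L : FinLimits K) (A B : ob K) (f : hom A B)
  (X Z : ob K) (E1 : Span K X Z) (E2 : Span K (pob L A X) (pob L B Z)) :
  is_discrete_fibration E2 ->
  (forall h : hom (sp_head (prod_span L (comma_span L f) E1)) (sp_head E2),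
     is_span_map (prod_span L (comma_span L f) E1) E2 h ->
     is_span_map (prod_span L (span_of f) E1) E2
       (h ⊚ prod1 L (i_f L f) (id1 (sp_head E1)))) /\
  (forall k : hom (sp_head (prod_span L (span_of f) E1)) (sp_head E2),
     is_span_map (prod_span L (span_of f) E1) E2 k ->
     exists! h : hom (sp_head (prod_span L (comma_span L f) E1)) (sp_head E2),
       is_span_map (prod_span L (comma_span L f) E1) E2 h /\
       h ⊚ prod1 L (i_f L f) (id1 (sp_head E1)) = k).
Proof.
move=> DF; split.
- move=> h; exact: is_span_map_comp (i_f_prod_span_map L f E1).
- move=> k kmap.
  have [h [hmap hk]] := dfib_extension_exists _ _ _ DF _ _ _ (i_f_prod_span_map L f E1)
    (prod_p_i_f L f E1) (counit_prod_d L f E1) (counit_prod_i_f L f E1) k kmap.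
  exists h; split=> // h' [h'map h'k].
  apply: (dfib_extension_unique (prod_span L (span_of f) E1)
    (prod_span L (comma_span L f) E1) _ DF _ _ _ (counit_prod_d L f E1) _ _ hmap h'map).
  by rewrite hk h'k.
Qed.
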